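(* Let $U$ be a one-dimensional quantum walk on $\mathcal H=\bigoplus_{n\in\mathbb Z}\mathcal H_n$. Then $U$ is unitary equivalent to \[ U_{r,\theta}=\sum_{n\in\mathbb Z}|e_1^{n-1}\rangle\langle r_ne_1^n+e^{i\theta_n}s_ne_2^n|+|e_2^{n+1}\rangle\langle -e^{-i\theta_n}s_ne_1^n+r_ne_2^n| \] for some sequences $0\le r_n\le 1$ and $\theta_n\in\mathbb R$ ($n\in\mathbb Z$), where $s_n=\sqrt{1-r_n^2}$ and $\theta_0=\theta_1=0$.
   Context: Let $\mathcal H_n=\mathbb C^2$ for $n\in\mathbb Z$, $\mathcal H=\bigoplus_{n\in\mathbb Z}\mathcal H_n$, $P_n$ the orthogonal projection of $\mathcal H$ onto $\mathcal H_n$, and $\{e_1^n,e_2^n\}$ the standard basis of $\mathcal H_n$. Dirac notation: for $x,y\in\mathcal H$, $|x\rangle\langle y|$ is the rank-one operator $z\mapsto\langle y,z\rangle x$ (inner product conjugate-linear in the first argument). A one-dimensional quantum walk is a unitary operator $U$ on $\mathcal H$ such that $\operatorname{rank}(P_nUP_m)=1$ if $m=n\pm1$ and $\operatorname{rank}(P_nUP_m)=0$ otherwise. Since $U$ and $e^{i\lambda}U$ are identified, two such unitaries $U_1,U_2$ are called unitary equivalent if there exist $\lambda\in\mathbb R$ and a unitary $W=\bigoplus_{n\in\mathbb Z}W_n$ (each $W_n$ a unitary on $\mathcal H_n$) with $e^{i\lambda}WU_1W^*=U_2$. *)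

From HB Require Import structures.
From mathcomp Require Import all_boot all_order all_algebra.
From mathcomp Require Import complex.
From mathcomp Require Import reals trigo.
Set Implicit Arguments. Unset Strict Implicit. Unset Printing Implicit Defensive.
Import Order.TTheory GRing.Theory Num.Theory.
Local Open Scope ring_scope.

(* The Hilbert space H = (+)_{n in Z} C^2 with standard basis e_1^n, e_2^n.
   A bounded operator T on H is represented by its block matrix:
   T n m : 'M_2 is the matrix of P_n T P_m : H_m -> H_n in the standard
   bases, i.e. (T n m) i j = < e_i^n , T e_j^m >. *)
Definition blockop (R : realType) := int -> int -> 'M[R[i]]_2.

Definition adjmx (R : realType) (m n : nat) (A : 'M[R[i]]_(m, n)) : 'M[R[i]]_(n, m) :=
  (map_mx (@conjc R) A)^T.

Definition expi (R : realType) (t : R) : R[i] := (cos t +i* sin t)%C.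

Definition e1 (R : realType) : 'cV[R[i]]_2 := \col_(k < 2) (if k == 0 then 1 else 0).
Definition e2 (R : realType) : 'cV[R[i]]_2 := \col_(k < 2) (if k == 1 then 1 else 0).

(* Dirac |x><y| (inner product conjugate-linear in the first argument):
   z |-> <y,z> x, whose matrix is x y^*. *)
Definition ketbra (R : realType) (x y : 'cV[R[i]]_2) : 'M[R[i]]_2 := x *m adjmx y.

(* Under the band condition (blocks vanish
   unless |n - m| = 1) all nonzero terms of the infinite sum
   sum_k (T k n)^* (T k m) occur for k in {n-1, n, n+1}, so these finite sums
   are the exact block entries of the operator products. *)
Definition adjmul (R : realType) (T : blockop R) (n m : int) : 'M[R[i]]_2 :=
  \sum_(k < 3) adjmx (T (n - 1 + (k : nat)%:Z) n) *m T (n - 1 + (k : nat)%:Z) m.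
Definition muladj (R : realType) (T : blockop R) (n m : int) : 'M[R[i]]_2 :=
  \sum_(k < 3) T n (n - 1 + (k : nat)%:Z) *m adjmx (T m (n - 1 + (k : nat)%:Z)).

Definition is_qwalk (R : realType) (U : blockop R) : Prop :=
  (forall n m : int,
     \rank (U n m) = (if (m == n + 1) || (m == n - 1) then 1%N else 0%N)) /\
  (forall n m : int, adjmul U n m = (n == m)%:R%:M) /\
  (forall n m : int, muladj U n m = (n == m)%:R%:M).

Definition unitary2 (R : realType) (A : 'M[R[i]]_2) : Prop :=
  adjmx A *m A = 1%:M /\ A *m adjmx A = 1%:M.

Definition unitary_equiv (R : realType) (U1 U2 : blockop R) : Prop :=
  exists (lam : R) (W : int -> 'M[R[i]]_2),
    (forall n, unitary2 (W n)) /\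
    (forall n m : int, expi lam *: (W n *m U1 n m *m adjmx (W m)) = U2 n m).

(* Block (p,q): only the n = q summand contributes. *)
Definition sfun (R : realType) (r : int -> R) (n : int) : R := Num.sqrt (1 - r n ^+ 2).

Definition Urt (R : realType) (r th : int -> R) : blockop R :=
  fun p q =>
    (if p == q - 1 then
       ketbra (e1 R) (((r q)%:C)%C *: e1 R + (expi (th q) * ((sfun r q)%:C)%C) *: e2 R)
     else 0)
  + (if p == q + 1 then
       ketbra (e2 R) ((- (expi (- th q) * ((sfun r q)%:C)%C)) *: e1 R + ((r q)%:C)%C *: e2 R)
     else 0).

From HB Require Import structures.
From mathcomp Require Import all_boot all_order all_algebra.
From mathcomp Require Import complex.
From mathcomp Require Import reals trigo.
From mathcomp Require Import ring lra zify.
Set Implicit Arguments. Unset Strict Implicit. Unset Printing Implicit Defensive.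
Import Order.TTheory GRing.Theory Num.Theory.
Local Open Scope ring_scope.

(* A quantum walk maps H_m into H_(m-1) + H_(m+1) through rank-one blocks,
   and U^*U = 1 forces the ranges of U(n,n+1) and U(n,n-1) in H_n to be
   orthogonal.  Rotating every H_n so that these ranges become C e_1 and C e_2
   turns U into a shift walk: column m of the walk is a unitary 2x2 coin C_m
   whose first row goes to e_1^(m-1) and whose second row goes to e_2^(m+1).
   A unitary 2x2 matrix is [[a, b], [-d b^*, d a^*]] with |d| = 1.  Conjugating
   by diagonal phases diag(x_n, y_n) and multiplying by a global phase e, where
   x and y solve first-order recurrences along Z, makes both diagonal entries
   of every coin equal to |a_m| = r_m and the off-diagonal ones
   e^(-i th_m) s_m and -e^(i th_m) s_m.  The two remaining free parameters, y_0
   and e, are spent on th_0 = th_1 = 0. *)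

Section Phase.
Variable K : numClosedFieldType.
Implicit Types z : K.

Lemma unimodular_conj z : `|z| = 1 -> z^* = z^-1.
Proof. by move=> z1; rewrite invC_norm z1 expr1n invr1 mul1r. Qed.

Lemma unimodular_neq0 z : `|z| = 1 -> z != 0.
Proof. by move=> z1; rewrite -normr_eq0 z1 oner_neq0. Qed.

(* [phase 0 = 1], so that [phase] is always unimodular. *)
Definition phase z : K := if z == 0 then 1 else z / `|z|.

Lemma norm_phase z : `|phase z| = 1.
Proof.
rewrite /phase; case: eqP => [_|/eqP z0]; first by rewrite normr1.
by rewrite normf_div normr_id divff // normr_eq0.
Qed.

Lemma phase_neq0 z : phase z != 0.
Proof. exact/unimodular_neq0/norm_phase. Qed.

Lemma phase_mul_norm z : phase z * `|z| = z.
Proof.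
rewrite /phase; case: eqP => [->|/eqP z0]; first by rewrite normr0 mulr0.
by rewrite divfK // normr_eq0.
Qed.

Lemma conj_phase_mul z : (phase z)^* * z = `|z|.
Proof.
by rewrite -{2}(phase_mul_norm z) mulrA -normCKC norm_phase expr1n mul1r.
Qed.

Lemma phase_norm z : phase `|z| = 1.
Proof.
rewrite /phase normr_eq0; case: eqP => [//|/eqP z0].
by rewrite normr_id divff // normr_eq0.
Qed.

End Phase.

Lemma int_recurrence (K : fieldType) (F : int -> K) (g0 : K) :
  (forall m, F m != 0) ->
  exists g : int -> K, g 0 = g0 /\ forall m, g (m + 1) = F m * g m.
Proof.
move=> F0.
pose up n := iteri n (fun k gk => F k * gk) g0.
pose down n := iteri n (fun k gk => (F (- k.+1%:Z))^-1 * gk) g0.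
exists (fun m => if m is Posz n then up n else down (absz m)); split=> // -[n|[|n]] /=.
- by rewrite addn1.
- by rewrite mulVKf.
- by rewrite subn1 /= NegzE mulVKf.
Qed.

Lemma unimodular_recurrence (K : numFieldType) (F : int -> K) (g0 : K) :
  (forall m, `|F m| = 1) -> `|g0| = 1 ->
  exists g : int -> K,
    [/\ g 0 = g0, forall m, g (m + 1) = F m * g m & forall m, `|g m| = 1].
Proof.
move=> F1 g01.
have F0 m : F m != 0 by rewrite -normr_eq0 F1 oner_neq0.
have [g [g0E grec]] := int_recurrence g0 F0; exists g; split=> //.
elim/int_rec => [|n IHn|n IHn]; first by rewrite g0E.
  by rewrite -addn1 PoszD grec normrM F1 IHn mulr1.
by move: IHn; rewrite -[- n%:Z](subrK 1) grec normrM F1 mul1r -opprD addrC -PoszD add1n.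
Qed.

Section Expi.
Variable R : realType.
Local Notation C := R[i].
Implicit Types (a b : R) (z : C).

Lemma expiD a b : expi (a + b) = expi a * expi b.
Proof.
rewrite /expi cosD sinD; apply/eqP; rewrite eq_complex /=.
by apply/andP; split; apply/eqP; ring.
Qed.

Lemma expiN a : expi (- a) = (expi a)^*.
Proof. by rewrite /expi cosN sinN. Qed.

Lemma expi0 : expi 0 = 1 :> C.
Proof. by rewrite /expi cos0 sin0. Qed.

Lemma norm_expi a : `|expi a| = 1.
Proof. by rewrite /expi normc_def /= cos2Dsin2 sqrtr1. Qed.

Definition arg z : R := if 0 <= complex.Im z then acos (complex.Re z) else - acos (complex.Re z).

Lemma expi_arg z : `|z| = 1 -> expi (arg z) = z.
Proof.
case: z => a b; rewrite normc_def /= => -[ab1].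
have {}ab1 : a ^+ 2 + b ^+ 2 = 1.
  by rewrite -[LHS]sqr_sqrtr ?ab1 ?expr1n // addr_ge0 // sqr_ge0.
have a_itv : a \in `[-1, 1] by rewrite in_itv /=; apply/andP; split; nra.
have sin_acos_b : sin (acos a) = `|b|.
  by rewrite sin_acos -?in_itv // -ab1 addrAC subrr add0r sqrtr_sqr.
rewrite /expi /arg /=; case: ifP => b0.
  by rewrite acosK // sin_acos_b ger0_norm.
by rewrite cosN sinN acosK // sin_acos_b ltr0_norm ?opprK // ltNge b0.
Qed.

Lemma conj_realC (x : R) : (x%:C%C)^* = x%:C%C :> C.
Proof. exact: conjc_real. Qed.

Lemma arg1 : arg 1 = 0.
Proof. by rewrite /arg /= lexx acos1. Qed.

Lemma expi_arg_phase z : expi (arg (phase z)) * `|z| = z.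
Proof. by rewrite expi_arg ?norm_phase ?phase_mul_norm. Qed.

Lemma arg_phase_norm z : arg (phase `|z|) = 0.
Proof. by rewrite phase_norm arg1. Qed.

End Expi.

Section Gauge.
Variable R : realType.
Local Notation C := R[i].
Variables (a b dt : int -> C) (e : C) (x y : int -> C).
Hypotheses (dt_norm : forall m, `|dt m| = 1) (e_norm : `|e| = 1).
Hypotheses (x_norm : forall m, `|x m| = 1) (y_norm : forall m, `|y m| = 1).
Hypothesis x_rec : forall m, x m = e * x (m - 1) * phase (a m).
Hypothesis y_rec :
  forall m, y (m + 1) = e^* ^+ 2 * x m * (x (m - 1))^* * (dt m)^* * y m.

Let eC : e^* = e^-1 := unimodular_conj e_norm.
Let xC m : (x m)^* = (x m)^-1 := unimodular_conj (x_norm m).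
Let yC m : (y m)^* = (y m)^-1 := unimodular_conj (y_norm m).
Let dtC m : (dt m)^* = (dt m)^-1 := unimodular_conj (dt_norm m).
Let e0 : e != 0 := unimodular_neq0 e_norm.
Let x0 m : x m != 0 := unimodular_neq0 (x_norm m).
Let y0 m : y m != 0 := unimodular_neq0 (y_norm m).
Let dt0 m : dt m != 0 := unimodular_neq0 (dt_norm m).

Lemma gauge_diag00 m : e * x (m - 1) * a m * (x m)^* = `|a m|.
Proof.
rewrite -conj_phase_mul [x m]x_rec !rmorphM /= eC !xC.
by field; rewrite e0 x0.
Qed.

Lemma gauge_diag11 m : e * y (m + 1) * (dt m * (a m)^*) * (y m)^* = `|a m|.
Proof.
rewrite -conj_normC -gauge_diag00 y_rec !rmorphM /= conjCK eC !xC !yC dtC.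
by field; rewrite e0 x0 y0 dt0.
Qed.

Lemma gauge_offdiag m :
  e * y (m + 1) * (- dt m * (b m)^*) * (x m)^* =
  - (e * x (m - 1) * b m * (y m)^*)^*.
Proof.
rewrite y_rec !rmorphM /= conjCK eC !xC dtC.
by field; rewrite e0 !x0 dt0.
Qed.

Hypothesis y_init : y 0 = e * x (-1) * phase (b 0).

Lemma gauge_phase0 : (e * x (0 - 1) * b 0 * (y 0)^*)^* = `|b 0|.
Proof.
rewrite -conj_normC -conj_phase_mul y_init !rmorphM /= !conjCK eC !xC.
by field; rewrite x0 e0.
Qed.

Lemma gauge_phase1 : e ^+ 2 = (dt 0)^* * phase (b 0) * (phase (b 1))^* ->
  (e * x (1 - 1) * b 1 * (y 1)^*)^* = `|b 1|.
Proof.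
move=> e_sqr; have := y_rec 0; rewrite add0r sub0r y_init => ->.
have ph1 : phase (b 1) = phase (b 0) / (dt 0 * e ^+ 2).
  rewrite e_sqr dtC (unimodular_conj (norm_phase _)).
  by field; rewrite !phase_neq0 dt0.
rewrite -conj_normC -conj_phase_mul subrr !rmorphM /= !conjCK eC !xC dtC ph1.
by field; rewrite e0 dt0 !x0.
Qed.

End Gauge.

Section CoinGauge.
Variable R : realType.
Local Notation C := R[i].

Lemma Re_normK (z : C) : (complex.Re `|z|)%:C%C = `|z|.
Proof. by rewrite normc_def. Qed.

Lemma Re_norm_ge0 (z : C) : 0 <= complex.Re `|z|.
Proof. by rewrite -ler0c Re_normK. Qed.

Lemma Re_norm_sqrD (a b : C) : `|a| ^+ 2 + `|b| ^+ 2 = 1 ->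
  complex.Re `|a| ^+ 2 + complex.Re `|b| ^+ 2 = 1.
Proof. by move=> ab1; apply: complexI; rewrite rmorphD !rmorphXn /= !Re_normK. Qed.

Lemma Re_norm_le1 (a b : C) : `|a| ^+ 2 + `|b| ^+ 2 = 1 -> 0 <= complex.Re `|a| <= 1.
Proof.
move=> /Re_norm_sqrD ab1; have a0 := Re_norm_ge0 a.
by apply/andP; split=> //; nra.
Qed.

Lemma sqrt_compl_norm (a b : C) : `|a| ^+ 2 + `|b| ^+ 2 = 1 ->
  (Num.sqrt (1 - complex.Re `|a| ^+ 2))%:C%C = `|b|.
Proof.
move=> /Re_norm_sqrD <-.
by rewrite addrAC subrr add0r sqrtr_sqr ger0_norm ?Re_normK ?Re_norm_ge0.
Qed.

Lemma coin_gauge (a b dt : int -> C) :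
  (forall m, `|a m| ^+ 2 + `|b m| ^+ 2 = 1) -> (forall m, `|dt m| = 1) ->
  exists (lam : R) (x y : int -> C) (r th : int -> R),
  [/\ (forall m, `|x m| = 1), (forall m, `|y m| = 1),
      (forall m, 0 <= r m <= 1), th 0 = 0 /\ th 1 = 0 &
      forall m, let w := expi (th m) * (sfun r m)%:C%C in
      [/\ expi lam * x (m - 1) * a m * (x m)^* = (r m)%:C%C,
          expi lam * x (m - 1) * b m * (y m)^* = w^*,
          expi lam * y (m + 1) * (- dt m * (b m)^*) * (x m)^* = - w &
          expi lam * y (m + 1) * (dt m * (a m)^*) * (y m)^* = (r m)%:C%C]].
Proof.
move=> ab1 dt1.
(* [lam] and [y 0] are chosen so that the phases at sites 0 and 1 vanish. *)
pose lam := arg ((dt 0)^* * phase (b 0) * (phase (b 1))^*) / 2.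
pose e := expi lam; have e_norm : `|e| = 1 := norm_expi lam.
have e_sqr : e ^+ 2 = (dt 0)^* * phase (b 0) * (phase (b 1))^*.
  rewrite expr2 -expiD -splitr expi_arg //.
  by rewrite !normrM !norm_conjC !norm_phase dt1 !mulr1.
pose Fx m := e * phase (a (m + 1)).
have Fx1 m : `|Fx m| = 1 by rewrite normrM e_norm norm_phase mulr1.
have [x [_ xrec x1]] := unimodular_recurrence Fx1 (normr1 _).
have x_rec m : x m = e * x (m - 1) * phase (a m).
  by rewrite -{1}(subrK 1 m) xrec /Fx subrK mulrAC.
pose Fy m := e^* ^+ 2 * x m * (x (m - 1))^* * (dt m)^*.
have Fy1 m : `|Fy m| = 1 by rewrite !normrM !norm_conjC e_norm !x1 dt1 !mulr1.
have y01 : `|e * x (-1) * phase (b 0)| = 1.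
  by rewrite !normrM e_norm x1 norm_phase !mulr1.
have [y [y0 yrec y1]] := unimodular_recurrence Fy1 y01.
pose r m := complex.Re `|a m|.
pose om m := (e * x (m - 1) * b m * (y m)^*)^*.
pose th m := arg (phase (om m)).
have om_norm m : `|om m| = `|b m|.
  by rewrite norm_conjC !normrM norm_conjC e_norm x1 y1 !mul1r mulr1.
have omE m : expi (th m) * (sfun r m)%:C%C = om m.
  by rewrite /sfun (sqrt_compl_norm (ab1 m)) -om_norm expi_arg_phase.
exists lam, x, y, r, th; split => //.
- by move=> m; apply: Re_norm_le1 (ab1 m).
- split; rewrite /th /om.
    by rewrite (gauge_phase0 e_norm x1 y0) arg_phase_norm.
  by rewrite (gauge_phase1 dt1 e_norm x1 yrec y0 e_sqr) arg_phase_norm.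
move=> m /=; rewrite omE Re_normK /om conjCK; split.
- exact: gauge_diag00 e_norm x1 x_rec m.
- by [].
- exact: gauge_offdiag dt1 e_norm x1 yrec m.
- exact: gauge_diag11 dt1 e_norm x1 y1 x_rec yrec m.
Qed.

End CoinGauge.

Section Adjoint.
Variable R : realType.
Local Notation C := R[i].
Implicit Types x y z w : 'cV[C]_2.

Lemma ord2_cases (i : 'I_2) : i = 0 \/ i = 1.
Proof. by case: i => [[|[|//]] ?]; [left | right]; apply/eqP. Qed.

Lemma lift0_ord2 : lift ord0 ord0 = 1 :> 'I_2.
Proof. exact/eqP. Qed.

Lemma ord0_ord2 : ord0 = 0 :> 'I_2.
Proof. by []. Qed.

Lemma adjmxE m n (A : 'M[C]_(m, n)) i j : adjmx A i j = (A j i)^*.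
Proof. by rewrite !mxE. Qed.

Lemma adjmxK m n (A : 'M[C]_(m, n)) : adjmx (adjmx A) = A.
Proof. by apply/matrixP => i j; rewrite !adjmxE conjCK. Qed.

Lemma adjmxM m n p (A : 'M[C]_(m, n)) (B : 'M[C]_(n, p)) :
  adjmx (A *m B) = adjmx B *m adjmx A.
Proof. by rewrite /adjmx map_mxM trmx_mul. Qed.

Lemma adjmxD m n (A B : 'M[C]_(m, n)) : adjmx (A + B) = adjmx A + adjmx B.
Proof. by apply/matrixP => i j; rewrite !mxE rmorphD. Qed.

Lemma adjmxZ m n k (A : 'M[C]_(m, n)) : adjmx (k *: A) = k^* *: adjmx A.
Proof. by apply/matrixP => i j; rewrite !mxE rmorphM. Qed.

Lemma adjmx0 m n : adjmx (0 : 'M[C]_(m, n)) = 0.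
Proof. by apply/matrixP => i j; rewrite !mxE rmorph0. Qed.

Lemma adjmx_mul0C m n p (A : 'M[C]_(m, n)) (B : 'M[C]_(m, p)) :
  adjmx A *m B = 0 -> adjmx B *m A = 0.
Proof. by move=> AB; rewrite -[LHS]adjmxK adjmxM adjmxK AB adjmx0. Qed.

Lemma adjmx_ketbra x y : adjmx (ketbra x y) = ketbra y x.
Proof. by rewrite /ketbra adjmxM adjmxK. Qed.

Lemma ketbraM x y z w :
  ketbra x y *m ketbra z w = x *m (adjmx y *m z) *m adjmx w.
Proof. by rewrite /ketbra !mulmxA. Qed.

Lemma e1E i j : e1 R i j = (i == 0)%:R.
Proof. by rewrite /e1 mxE; case: (i == 0). Qed.

Lemma e2E i j : e2 R i j = (i == 1)%:R.
Proof. by rewrite /e2 mxE; case: (i == 1). Qed.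

Lemma adjmx_e1_e1 : adjmx (e1 R) *m e1 R = 1%:M.
Proof.
apply/matrixP => i j; rewrite !ord1 !mxE !big_ord_recl big_ord0 !adjmxE !e1E /=.
by rewrite rmorph1 rmorph0 !(mulr0, mulr1, addr0).
Qed.

Lemma adjmx_e2_e2 : adjmx (e2 R) *m e2 R = 1%:M.
Proof.
apply/matrixP => i j; rewrite !ord1 !mxE !big_ord_recl big_ord0 !adjmxE !e2E /=.
by rewrite rmorph1 rmorph0 !(mulr0, mulr1, addr0, add0r).
Qed.

Lemma adjmx_e1_e2 : adjmx (e1 R) *m e2 R = 0.
Proof.
apply/matrixP => i j; rewrite !ord1 !mxE !big_ord_recl big_ord0 !adjmxE !e1E !e2E /=.
by rewrite !(rmorph0, rmorph1, mulr0, mul0r, addr0).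
Qed.

Lemma adjmx_e2_e1 : adjmx (e2 R) *m e1 R = 0.
Proof. exact/adjmx_mul0C/adjmx_e1_e2. Qed.

Lemma ketbra_e1_add_e2 : ketbra (e1 R) (e1 R) + ketbra (e2 R) (e2 R) = 1%:M.
Proof.
apply/matrixP => i j; rewrite !mxE !big_ord1 !adjmxE !e1E !e2E.
by have [->|->] := ord2_cases i; have [->|->] := ord2_cases j;
  rewrite /= !(rmorph0, rmorph1, mulr0, mul0r, mulr1, addr0, add0r).
Qed.

End Adjoint.

Section Unitary.
Variable R : realType.
Local Notation C := R[i].
Local Notation e1 := (e1 R).
Local Notation e2 := (e2 R).
Implicit Types (A B : 'M[C]_2) (u v : 'cV[C]_2).

Lemma unitary2_adj A : adjmx A *m A = 1%:M -> unitary2 A.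
Proof. by move=> AA; split=> //; apply: mulmx1C. Qed.

Lemma unitary2_mul A B : unitary2 A -> unitary2 B -> unitary2 (A *m B).
Proof.
move=> [AA _] [BB _]; apply: unitary2_adj.
by rewrite adjmxM mulmxA -(mulmxA _ _ A) AA mulmx1 BB.
Qed.

Lemma unitary_equiv_trans (U V T : blockop R) :
  unitary_equiv U V -> unitary_equiv V T -> unitary_equiv U T.
Proof.
move=> [l1 [W1 [W1u UV]]] [l2 [W2 [W2u VT]]].
exists (l2 + l1), (fun n => W2 n *m W1 n); split=> [n|n m].
  exact: unitary2_mul.
by rewrite -VT -UV expiD -scalerA -scalemxAr -scalemxAl adjmxM !mulmxA.
Qed.

Definition frame u v : 'M[C]_2 := ketbra e1 u + ketbra e2 v.

Lemma frame_unitary u v : adjmx u *m u = 1%:M -> adjmx v *m v = 1%:M ->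
  adjmx u *m v = 0 -> unitary2 (frame u v).
Proof.
move=> uu vv uv; have vu := adjmx_mul0C uv.
apply/unitary2_adj/mulmx1C.
rewrite adjmxD !adjmx_ketbra mulmxDl !mulmxDr !ketbraM uu vv uv vu.
by rewrite !mulmx0 !mul0mx !mulmx1 addr0 add0r ketbra_e1_add_e2.
Qed.

Lemma ketbra_e1_frame u v : ketbra e1 e1 *m frame u v = ketbra e1 u.
Proof.
by rewrite mulmxDr !ketbraM adjmx_e1_e1 adjmx_e1_e2 mulmx1 mulmx0 mul0mx addr0.
Qed.

Lemma ketbra_e2_frame u v : ketbra e2 e2 *m frame u v = ketbra e2 v.
Proof.
by rewrite mulmxDr !ketbraM adjmx_e2_e2 adjmx_e2_e1 mulmx1 mulmx0 mul0mx add0r.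
Qed.

End Unitary.

Section RangeVector.
Variable R : realType.
Local Notation C := R[i].

Definition normalize n (x : 'cV[C]_n) : 'cV[C]_n :=
  (sqrtC ((adjmx x *m x) 0 0))^-1 *: x.

Lemma normalize_unit n (x : 'cV[C]_n) : x != 0 ->
  adjmx (normalize x) *m normalize x = 1%:M.
Proof.
move=> x0; set s := (adjmx x *m x) 0 0.
have sE : s = \sum_i `|x i 0| ^+ 2.
  by rewrite /s mxE; apply: eq_bigr => i _; rewrite adjmxE normCKC.
have s_ge0 : 0 <= s by rewrite sE sumr_ge0 // => i _; rewrite exprn_ge0.
have s_neq0 : s != 0.
  apply: contra x0; rewrite sE psumr_eq0 => [/allP x0|i _]; last exact: exprn_ge0.
  apply/eqP/matrixP => i j; rewrite (ord1 j) mxE.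
  by have /(_ (mem_index_enum i))/= := x0 i; rewrite sqrf_eq0 normr_eq0 => /eqP.
have k_real : (sqrtC s)^-1^* = (sqrtC s)^-1.
  by rewrite geC0_conj // invr_ge0 sqrtC_ge0.
have xx : adjmx x *m x = s%:M by apply: mx11_scalar.
rewrite /normalize -/s adjmxZ -scalemxAl -scalemxAr scalerA k_real xx.
by rewrite scale_scalar_mx -expr2 exprVn sqrtCK mulVf.
Qed.

Definition range_unit m n (A : 'M[C]_(m, n.+1)) : 'cV[C]_m :=
  normalize (col (odflt ord0 [pick j | col j A != 0]) A).

Lemma range_unit_norm m n (A : 'M[C]_(m, n.+1)) : A != 0 ->
  adjmx (range_unit A) *m range_unit A = 1%:M.
Proof.
move=> A0; apply: normalize_unit; case: pickP => [j //|/= Acol0].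
apply: contra A0 => /eqP Ac0; apply/eqP/matrixP => i j.
by have /negbFE/eqP/colP/(_ i) := Acol0 j; rewrite !mxE.
Qed.

Lemma range_unit_orthl p m n (A : 'M[C]_(m, n.+1)) (B : 'M[C]_(m, p)) :
  adjmx A *m B = 0 -> adjmx (range_unit A) *m B = 0.
Proof.
move=> AB; rewrite /range_unit /normalize; set k := (sqrtC _)^-1.
by rewrite colE adjmxZ -scalemxAl adjmxM -mulmxA AB mulmx0 scaler0.
Qed.

Lemma range_unit_orthr p m n (A : 'M[C]_(m, p)) (B : 'M[C]_(m, n.+1)) :
  adjmx A *m B = 0 -> adjmx A *m range_unit B = 0.
Proof.
by move/adjmx_mul0C/range_unit_orthl/adjmx_mul0C.
Qed.

End RangeVector.

Section ShiftWalk.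
Variable R : realType.
Local Notation C := R[i].
Local Notation e1 := (e1 R).
Local Notation e2 := (e2 R).
Implicit Types (A B : 'M[C]_2).

Definition shift_walk (Cn : int -> 'M[C]_2) : blockop R := fun n m =>
  (if n == m - 1 then ketbra e1 e1 *m Cn m else 0)
  + (if n == m + 1 then ketbra e2 e2 *m Cn m else 0).

Lemma ketbra_e1_e2_mul : ketbra e1 e1 *m ketbra e2 e2 = 0.
Proof. by rewrite ketbraM adjmx_e1_e2 mulmx0 mul0mx. Qed.

Lemma ketbra_e1_addK A B : ketbra e2 e2 *m A = 0 -> ketbra e1 e1 *m B = 0 ->
  ketbra e1 e1 *m (A + B) = A.
Proof.
move=> A2 B1; rewrite mulmxDr B1 addr0.
by rewrite -[RHS]mul1mx -ketbra_e1_add_e2 mulmxDl A2 addr0.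
Qed.

Lemma ketbra_e2_addK A B : ketbra e2 e2 *m A = 0 -> ketbra e1 e1 *m B = 0 ->
  ketbra e2 e2 *m (A + B) = B.
Proof.
move=> A2 B1; rewrite mulmxDr A2 add0r.
by rewrite -[RHS]mul1mx -ketbra_e1_add_e2 mulmxDl B1 add0r.
Qed.

Lemma unitary2_addK A B : ketbra e2 e2 *m A = 0 -> ketbra e1 e1 *m B = 0 ->
  adjmx A *m A + adjmx B *m B = 1%:M -> unitary2 (A + B).
Proof.
move=> A2 B1 AB1; apply: unitary2_adj.
have AB0 : adjmx A *m B = 0.
  rewrite -(ketbra_e1_addK A2 (mulmx0 _ _)) -(ketbra_e2_addK (mulmx0 _ _) B1).
  rewrite addr0 add0r adjmxM adjmx_ketbra -mulmxA (mulmxA (ketbra e1 e1)).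
  by rewrite ketbra_e1_e2_mul mul0mx mulmx0.
by rewrite adjmxD mulmxDl !mulmxDr AB0 (adjmx_mul0C AB0) addr0 add0r.
Qed.

Lemma shift_walk_of_blocks (V : blockop R) :
  (forall n m, m != n + 1 -> m != n - 1 -> V n m = 0) ->
  (forall m, ketbra e2 e2 *m V (m - 1) m = 0) ->
  (forall m, ketbra e1 e1 *m V (m + 1) m = 0) ->
  forall n m, V n m = shift_walk (fun m => V (m - 1) m + V (m + 1) m) n m.
Proof.
move=> V0 V2 V1 n m; rewrite /shift_walk.
have [->|n1] := eqVneq n (m - 1).
  by rewrite ifF ?ketbra_e1_addK ?addr0 //; apply/negbTE; lia.
have [->|n2] := eqVneq n (m + 1); first by rewrite ketbra_e2_addK ?add0r.
by rewrite V0 ?addr0 //; lia.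
Qed.

End ShiftWalk.

Section QuantumWalk.
Variable R : realType.
Local Notation C := R[i].
Local Notation e1 := (e1 R).
Local Notation e2 := (e2 R).

Lemma adjmulE (T : blockop R) n m : adjmul T n m =
  adjmx (T (n - 1) n) *m T (n - 1) m + adjmx (T n n) *m T n m
  + adjmx (T (n + 1) n) *m T (n + 1) m.
Proof.
rewrite /adjmul !big_ord_recl big_ord0 addr0 /= /bump /=.
have -> : n - 1 + 1%N = n by lia.
have -> : n - 1 + 2%N = n + 1 by lia.
by rewrite addr0 addrA.
Qed.

Lemma conj_adjmx_mul (W W' X Y : 'M[C]_2) : unitary2 W ->
  adjmx (W *m X *m adjmx W') *m (W *m Y *m adjmx W') =
  W' *m (adjmx X *m Y) *m adjmx W'.
Proof.
case=> WW _; rewrite !adjmxM adjmxK !mulmxA.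
by rewrite -(mulmxA (W' *m adjmx X)) WW mulmx1.
Qed.

Variable U : blockop R.
Hypothesis hU : is_qwalk U.

Lemma qwalk_block0 n m : m != n + 1 -> m != n - 1 -> U n m = 0.
Proof.
case: hU => rkU _ m1 m2; apply/eqP.
by rewrite -mxrank_eq0 rkU (negbTE m1) (negbTE m2).
Qed.

Lemma qwalk_block_neq0 n m : (m == n + 1) || (m == n - 1) -> U n m != 0.
Proof. by case: hU => rkU _ nm; rewrite -mxrank_eq0 rkU nm. Qed.

Lemma qwalk_orth n : adjmx (U n (n + 1)) *m U n (n - 1) = 0.
Proof.
case: hU => _ [UU _]; have := UU (n + 1) (n - 1); rewrite adjmulE addrK.
rewrite (qwalk_block0 (n := n + 1) (m := n + 1)) 1?(qwalk_block0 (n := n + 1 + 1) (m := n - 1));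
  try lia.
rewrite adjmx0 mul0mx mulmx0 !addr0 => ->.
have -> : (n + 1 == n - 1) = false by lia.
by rewrite raddf0.
Qed.

Lemma qwalk_column m :
  adjmx (U (m - 1) m) *m U (m - 1) m + adjmx (U (m + 1) m) *m U (m + 1) m = 1%:M.
Proof.
case: hU => _ [UU _]; have := UU m m; rewrite adjmulE eqxx.
by rewrite (qwalk_block0 (n := m) (m := m)) ?adjmx0 ?mul0mx ?addr0 //; lia.
Qed.

(* The rows of [walk_frame n] span the ranges of U(n, n+1) and U(n, n-1). *)
Definition walk_frame n :=
  frame (range_unit (U n (n + 1))) (range_unit (U n (n - 1))).

Lemma walk_frame_unitary n : unitary2 (walk_frame n).
Proof.
apply: frame_unitary.
- by apply/range_unit_norm/qwalk_block_neq0; rewrite eqxx.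
- by apply/range_unit_norm/qwalk_block_neq0; rewrite eqxx orbT.
- exact/range_unit_orthl/range_unit_orthr/qwalk_orth.
Qed.

Lemma walk_frame_e2 m : ketbra e2 e2 *m (walk_frame (m - 1) *m U (m - 1) m) = 0.
Proof.
rewrite mulmxA ketbra_e2_frame /ketbra -mulmxA.
have := qwalk_orth (m - 1); rewrite subrK => /adjmx_mul0C/range_unit_orthl ->.
by rewrite mulmx0.
Qed.

Lemma walk_frame_e1 m : ketbra e1 e1 *m (walk_frame (m + 1) *m U (m + 1) m) = 0.
Proof.
rewrite mulmxA ketbra_e1_frame /ketbra -mulmxA.
have := qwalk_orth (m + 1); rewrite addrK => /range_unit_orthl ->.
by rewrite mulmx0.
Qed.

Lemma qwalk_shift_walk :
  exists Cn, (forall m, unitary2 (Cn m)) /\ unitary_equiv U (shift_walk Cn).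
Proof.
pose V n m := walk_frame n *m U n m *m adjmx (walk_frame m).
have V2 m : ketbra e2 e2 *m V (m - 1) m = 0 by rewrite mulmxA walk_frame_e2 mul0mx.
have V1 m : ketbra e1 e1 *m V (m + 1) m = 0 by rewrite mulmxA walk_frame_e1 mul0mx.
exists (fun m => V (m - 1) m + V (m + 1) m); split.
  move=> m; apply: unitary2_addK (V2 m) (V1 m) _.
  rewrite !(conj_adjmx_mul _ _ _ (walk_frame_unitary _)).
  rewrite -mulmxDl -mulmxDr qwalk_column // mulmx1.
  by case: (walk_frame_unitary m).
exists 0, walk_frame; split; first exact: walk_frame_unitary.
move=> n m; rewrite expi0 scale1r.
apply: (shift_walk_of_blocks (V := V)) => // {}n {}m m1 m2.
by rewrite /V qwalk_block0 // mulmx0 mul0mx.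
Qed.

End QuantumWalk.

Section CoinMatrix.
Variable R : realType.
Local Notation C := R[i].
Local Notation e1 := (e1 R).
Local Notation e2 := (e2 R).

Lemma det_mx22 (A : 'M[C]_2) : \det A = A 0 0 * A 1 1 - A 0 1 * A 1 0.
Proof.
rewrite (expand_det_row _ 0) !big_ord_recl big_ord0 addr0 /cofactor !det_mx11 !mxE /=.
rewrite expr0 expr1 mul1r mulN1r mulrN.
by congr (_ * A _ _ - A _ _ * A _ _); apply/eqP.
Qed.

Lemma unitary2_entries (A : 'M[C]_2) : unitary2 A ->
  [/\ `|A 0 0| ^+ 2 + `|A 0 1| ^+ 2 = 1, `|\det A| = 1,
      A 1 0 = - \det A * (A 0 1)^* & A 1 1 = \det A * (A 0 0)^*].
Proof.
case=> _ AA; have AAE i j := congr1 (fun M : 'M[C]_2 => M i j) AA.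
move: (AAE 0 0) (AAE 1 0) (AAE 1 1).
rewrite !mxE !big_ord_recl !big_ord0 !adjmxE lift0_ord2 ord0_ord2 /= !addr0 det_mx22.
set a := A 0 0; set b := A 0 1; set c := A 1 0; set d := A 1 1.
move=> ab1 ca0 cd1; set dt := a * d - b * c.
have {}ab1 : a * a^* + b * b^* = 1 := ab1.
have {}cd1 : c * c^* + d * d^* = 1 := cd1.
have dE : d = dt * a^*.
  apply/eqP; rewrite -subr_eq0.
  have -> : d - dt * a^* = d * (1 - (a * a^* + b * b^*)) + b * (c * a^* + d * b^*).
    by rewrite /dt; ring.
  by rewrite ab1 ca0 subrr !mulr0 addr0.
have cE : c = - dt * b^*.
  apply/eqP; rewrite -subr_eq0.
  have -> : c - - dt * b^* = c * (1 - (a * a^* + b * b^*)) + a * (c * a^* + d * b^*).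
    by rewrite /dt; ring.
  by rewrite ab1 ca0 subrr !mulr0 addr0.
clearbody dt; split=> //; first by rewrite !normCK.
have : `|dt| ^+ 2 = 1.
  rewrite normCK -cd1 cE dE !rmorphM rmorphN /= !conjCK -[LHS]mulr1 -ab1.
  ring.
by move/eqP; rewrite sqrp_eq1 // => /eqP.
Qed.

Definition diag2 (u v : C) : 'M[C]_2 := u *: ketbra e1 e1 + v *: ketbra e2 e2.

Lemma diag2_ketbra_e1 u v v' : diag2 u v *m ketbra e1 e1 = ketbra e1 e1 *m diag2 u v'.
Proof.
rewrite mulmxDl mulmxDr -!scalemxAl -!scalemxAr !ketbraM.
by rewrite adjmx_e1_e1 adjmx_e1_e2 adjmx_e2_e1 !mulmx0 !mul0mx !scaler0 addr0.
Qed.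

Lemma diag2_ketbra_e2 u u' v : diag2 u v *m ketbra e2 e2 = ketbra e2 e2 *m diag2 u' v.
Proof.
rewrite mulmxDl mulmxDr -!scalemxAl -!scalemxAr !ketbraM.
by rewrite adjmx_e2_e2 adjmx_e1_e2 adjmx_e2_e1 !mulmx0 !mul0mx !scaler0 add0r.
Qed.

Lemma diag2E u v i j : diag2 u v i j = (i == j)%:R * (if i == 0 then u else v).
Proof.
rewrite !mxE !big_ord1 !adjmxE !e1E !e2E.
by have [->|->] := ord2_cases i; have [->|->] := ord2_cases j;
  rewrite /= !(rmorph0, rmorph1); ring.
Qed.

Lemma mul_diag2 u v (A : 'M[C]_2) i j :
  (diag2 u v *m A) i j = (if i == 0 then u else v) * A i j.
Proof.
rewrite mxE !big_ord_recl big_ord0 !diag2E lift0_ord2 ord0_ord2.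
by have [->|->] := ord2_cases i; rewrite /=; ring.
Qed.

Lemma mul_adj_diag2 u v (A : 'M[C]_2) i j :
  (A *m adjmx (diag2 u v)) i j = A i j * (if j == 0 then u else v)^*.
Proof.
rewrite mxE !big_ord_recl big_ord0 !adjmxE !diag2E lift0_ord2 ord0_ord2.
by have [->|->] := ord2_cases j; rewrite /= !rmorphM ?rmorph0 ?rmorph1; ring.
Qed.

Lemma diag2_unitary u v : `|u| = 1 -> `|v| = 1 -> unitary2 (diag2 u v).
Proof.
move=> u1 v1; apply/unitary2_adj/mulmx1C/matrixP => i j.
rewrite mul_adj_diag2 diag2E !mxE.
have [->|->] := ord2_cases i; have [->|->] := ord2_cases j; rewrite /= ?mul0r //.
  by rewrite mul1r -normCK u1 expr1n.
by rewrite mul1r -normCK v1 expr1n.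
Qed.

End CoinMatrix.

Section Coin.
Variable R : realType.
Local Notation C := R[i].
Local Notation e1 := (e1 R).
Local Notation e2 := (e2 R).

Definition coin (r th : int -> R) (m : int) : 'M[C]_2 :=
  frame ((r m)%:C%C *: e1 + (expi (th m) * (sfun r m)%:C%C) *: e2)
        ((- (expi (- th m) * (sfun r m)%:C%C)) *: e1 + (r m)%:C%C *: e2).

Lemma frameE (a b c d : C) i j :
  frame (a *: e1 + b *: e2) (c *: e1 + d *: e2) i j =
  if i == 0 then (if j == 0 then a^* else b^*) else (if j == 0 then c^* else d^*).
Proof.
rewrite !mxE !big_ord1 !adjmxE !mxE.
by have [->|->] := ord2_cases i; have [->|->] := ord2_cases j;
  rewrite /= rmorphD !rmorphM !(rmorph0, rmorph1); ring.
Qed.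

Lemma coinE r th m i j : let w := expi (th m) * (sfun r m)%:C%C in
  coin r th m i j =
  if i == 0 then (if j == 0 then (r m)%:C%C else w^*)
  else (if j == 0 then - w else (r m)%:C%C).
Proof.
by rewrite /coin frameE expiN rmorphN !rmorphM /= conjCK !conj_realC.
Qed.

Lemma unitary_coin_gauge (Cn : int -> 'M[C]_2) : (forall m, unitary2 (Cn m)) ->
  exists (lam : R) (x y : int -> C) (r th : int -> R),
  [/\ (forall m, `|x m| = 1), (forall m, `|y m| = 1),
      (forall m, 0 <= r m <= 1), th 0 = 0 /\ th 1 = 0 &
      forall m, expi lam *: (diag2 (x (m - 1)) (y (m + 1)) *m Cn m
                             *m adjmx (diag2 (x m) (y m))) = coin r th m].
Proof.
move=> Cu.
have ab1 m : `|Cn m 0 0| ^+ 2 + `|Cn m 0 1| ^+ 2 = 1 by case: (unitary2_entries (Cu m)).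
have dt1 m : `|\det (Cn m)| = 1 by case: (unitary2_entries (Cu m)).
have [lam [x [y [r [th [x1 y1 r01 th01 E]]]]]] := coin_gauge ab1 dt1.
exists lam, x, y, r, th; split=> // m; apply/matrixP => i j.
have [E00 E01 E10 E11] := E m; have [_ _ C10 C11] := unitary2_entries (Cu m).
rewrite mxE mul_adj_diag2 mul_diag2 coinE.
have [->|->] := ord2_cases i; have [->|->] := ord2_cases j;
  rewrite /= ?C10 ?C11; [rewrite -E00 | rewrite -E01 | rewrite -E10 | rewrite -E11]; ring.
Qed.

Lemma shift_walk_gauge (Cn Cn' : int -> 'M[C]_2) (lam : R) (x y : int -> C) :
  (forall n, `|x n| = 1) -> (forall n, `|y n| = 1) ->
  (forall m, expi lam *: (diag2 (x (m - 1)) (y (m + 1)) *m Cn m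
                          *m adjmx (diag2 (x m) (y m))) = Cn' m) ->
  unitary_equiv (shift_walk Cn) (shift_walk Cn').
Proof.
move=> x1 y1 CC; exists lam, (fun n => diag2 (x n) (y n)).
split; first by move=> n; apply: diag2_unitary.
move=> n m; rewrite /shift_walk -CC.
case: ifP => [/eqP n1 | _]; case: ifP => [/eqP n2 | _]; try lia.
- by rewrite n1 !addr0 mulmxA (diag2_ketbra_e1 _ _ (y (m + 1))) -scalemxAr !mulmxA.
- by rewrite n2 !add0r mulmxA (diag2_ketbra_e2 _ (x (m - 1))) -scalemxAr !mulmxA.
- by rewrite addr0 mulmx0 mul0mx scaler0.
Qed.

Lemma Urt_shift_walk (r th : int -> R) : Urt r th = shift_walk (coin r th).
Proof.
apply: boolp.funext => n; apply: boolp.funext => m.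
by rewrite /shift_walk /coin ketbra_e1_frame ketbra_e2_frame.
Qed.

End Coin.

Theorem theorem2p4 (R : realType) (U : blockop R) :
  is_qwalk U ->
  exists r th : int -> R,
    (forall n, 0 <= r n <= 1) /\ th 0 = 0 /\ th 1 = 0 /\
    unitary_equiv U (Urt r th).
Proof.
move=> hU; have [Cn [Cu UC]] := qwalk_shift_walk hU.
have [lam [x [y [r [th [x1 y1 r01 [th0 th1] gauge]]]]]] := unitary_coin_gauge Cu.
exists r, th; do 3 split=> //.
by rewrite Urt_shift_walk; apply: unitary_equiv_trans UC (shift_walk_gauge x1 y1 gauge).
Qed.
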